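(* Let $H_\theta:\mathbb{R}^n\to\mathbb{R}^D$ be injective and satisfy $\|H_\theta(x)-H_\theta(y)\|_2\ge\alpha\|x-y\|_2$ for all $x,y\in\mathbb{R}^n$, for some $\alpha\ge 0$. Let $w\in\mathbb{S}^{D-1}$ satisfy $\mathrm{dist}(w,s_\theta(\mathscr{P}))\ge\rho$. Then for all $x,y\in\mathbb{R}^n$, $$\|Q_wH_\theta(x)-Q_wH_\theta(y)\|_2\ge\frac{1}{\sqrt2}\rho\alpha\|x-y\|_2.$$
   Context: $\mathbb{S}^{D-1}$ is the unit sphere in $\mathbb{R}^D$; distances are Euclidean in $\mathbb{R}^D$. $\mathscr{P}=\{(x,y)\in\mathbb{R}^n\times\mathbb{R}^n: x\ne y\}$ and $s_\theta:\mathscr{P}\to\mathbb{S}^{D-1}$, $s_\theta(x,y)=\frac{H_\theta(x)-H_\theta(y)}{\|H_\theta(x)-H_\theta(y)\|_2}$. For a unit vector $w$, $Q_w:\mathbb{R}^D\to\mathbb{R}^D$ is $Q_w(z)=z-\langle z,w\rangle w$. *)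

From mathcomp Require Import all_boot all_order all_algebra.
From mathcomp Require Import all_classical all_reals.
Set Implicit Arguments. Unset Strict Implicit. Unset Printing Implicit Defensive.
Import Order.TTheory GRing.Theory Num.Theory.
Local Open Scope classical_set_scope.
Local Open Scope ring_scope.

Section Euclid.
Variable R : realType.

Definition edot (k : nat) (u v : 'rV[R]_k) : R := \sum_(i < k) u 0 i * v 0 i.
Definition enorm (k : nat) (u : 'rV[R]_k) : R := Num.sqrt (edot u u).

Definition edist_set (k : nat) (w : 'rV[R]_k) (S : set 'rV[R]_k) : R :=
  inf [set enorm (w - s) | s in S].

Definition pairsP (n : nat) : set ('rV[R]_n * 'rV[R]_n) :=
  [set p | p.1 <> p.2].

Definition secant (n D : nat) (H : 'rV[R]_n -> 'rV[R]_D)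
  (p : 'rV[R]_n * 'rV[R]_n) : 'rV[R]_D :=
  (enorm (H p.1 - H p.2))^-1 *: (H p.1 - H p.2).

Definition Qproj (D : nat) (w z : 'rV[R]_D) : 'rV[R]_D := z - edot z w *: w.
End Euclid.

(* For a unit vector u, ‖Q_w u‖² = 1 - ⟨u,w⟩² while ‖w ∓ u‖² = 2 ∓ 2⟨u,w⟩.
   Both u = s_θ(x,y) and -u = s_θ(y,x) lie at distance at least ρ from w, so
   ρ²/2 <= 1 - |⟨u,w⟩| <= 1 - ⟨u,w⟩², i.e. ‖Q_w u‖ >= ρ/√2.  Since Q_w is
   linear, scaling u back to H x - H y and using ‖H x - H y‖ >= α‖x - y‖
   gives the claim. *)
From mathcomp Require Import all_boot all_order all_algebra.
From mathcomp Require Import all_classical all_reals.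
From mathcomp Require Import ring lra.
Import Order.TTheory GRing.Theory Num.Theory.
Local Open Scope classical_set_scope.
Local Open Scope ring_scope.

Set Implicit Arguments.
Unset Strict Implicit.
Unset Printing Implicit Defensive.

Section EuclideanRowVectors.
Variables (R : realType) (k : nat).
Implicit Types (a rho : R) (u v w z : 'rV[R]_k).

Lemma edotC u v : edot u v = edot v u.
Proof. by apply: eq_bigr => i _; rewrite mulrC. Qed.

Lemma edotDl u v z : edot (u + v) z = edot u z + edot v z.
Proof. by rewrite /edot -big_split; apply: eq_bigr => i _; rewrite mxE mulrDl. Qed.

Lemma edotNl u v : edot (- u) v = - edot u v.
Proof. by rewrite /edot -sumrN; apply: eq_bigr => i _; rewrite mxE mulNr. Qed.

Lemma edotZl a u v : edot (a *: u) v = a * edot u v.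
Proof. by rewrite /edot mulr_sumr; apply: eq_bigr => i _; rewrite mxE mulrA. Qed.

Lemma edotDr u v z : edot z (u + v) = edot z u + edot z v.
Proof. by rewrite edotC edotDl !(edotC z). Qed.

Lemma edotNr u v : edot u (- v) = - edot u v.
Proof. by rewrite edotC edotNl edotC. Qed.

Lemma edotZr a u v : edot u (a *: v) = a * edot u v.
Proof. by rewrite edotC edotZl edotC. Qed.

Lemma edot_ge0 u : 0 <= edot u u.
Proof. by apply: sumr_ge0 => i _; rewrite -expr2 sqr_ge0. Qed.

Lemma enorm_ge0 u : 0 <= enorm u.
Proof. exact: sqrtr_ge0. Qed.

Lemma sqr_enorm u : enorm u ^+ 2 = edot u u.
Proof. by rewrite sqr_sqrtr // edot_ge0. Qed.

Lemma enormZ a u : enorm (a *: u) = `|a| * enorm u.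
Proof.
by rewrite /enorm edotZl edotZr mulrA -expr2 sqrtrM ?sqr_ge0 // sqrtr_sqr.
Qed.

Lemma enormN u : enorm (- u) = enorm u.
Proof. by rewrite -scaleN1r enormZ normrN1 mul1r. Qed.

Lemma enorm0 : enorm (0 : 'rV[R]_k) = 0.
Proof. by rewrite -(scale0r (0 : 'rV[R]_k)) enormZ normr0 mul0r. Qed.

Lemma enorm_normalize v : enorm v != 0 -> enorm ((enorm v)^-1 *: v) = 1.
Proof. by move=> v0; rewrite enormZ ger0_norm ?invr_ge0 ?enorm_ge0 // mulVf. Qed.

Lemma sqr_enormD u v :
  enorm (u + v) ^+ 2 = enorm u ^+ 2 + 2 * edot u v + enorm v ^+ 2.
Proof. by rewrite !sqr_enorm edotDl !edotDr (edotC v u); ring. Qed.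

Lemma sqr_enormB u v :
  enorm (u - v) ^+ 2 = enorm u ^+ 2 - 2 * edot u v + enorm v ^+ 2.
Proof. by rewrite sqr_enormD edotNr enormN; ring. Qed.

Lemma QprojB w u v : Qproj w u - Qproj w v = Qproj w (u - v).
Proof.
by rewrite /Qproj edotDl edotNl; apply/rowP => i; rewrite !mxE; ring.
Qed.

Lemma QprojZ w a u : Qproj w (a *: u) = a *: Qproj w u.
Proof. by rewrite /Qproj edotZl scalerBr scalerA. Qed.

Lemma sqr_enorm_Qproj w u :
  enorm w = 1 -> enorm (Qproj w u) ^+ 2 = enorm u ^+ 2 - edot u w ^+ 2.
Proof.
move=> w1; rewrite sqr_enormB edotZr [enorm (_ *: w) ^+ 2]sqr_enorm.
by rewrite edotZl edotZr -sqr_enorm w1; ring.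
Qed.

Lemma enorm_Qproj_unit_ge w u rho :
  enorm w = 1 -> enorm u = 1 -> 0 <= rho ->
  rho <= enorm (w - u) -> rho <= enorm (w + u) ->
  (Num.sqrt 2)^-1 * rho <= enorm (Qproj w u).
Proof.
move=> w1 u1 rho_ge0 rho_le_wBu rho_le_wDu.
set t := edot u w.
have sqr_wBu : enorm (w - u) ^+ 2 = 2 - 2 * t.
  by rewrite sqr_enormB w1 u1 (edotC w) -/t; ring.
have sqr_wDu : enorm (w + u) ^+ 2 = 2 + 2 * t.
  by rewrite sqr_enormD w1 u1 (edotC w) -/t; ring.
have sqr_rho_le (d : R) : rho <= d -> rho ^+ 2 <= d ^+ 2.
  by move=> rho_le_d; rewrite ler_sqr ?nnegrE // (le_trans rho_ge0).
have := sqr_rho_le _ rho_le_wBu; rewrite sqr_wBu => rho2_le_minus.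
have := sqr_rho_le _ rho_le_wDu; rewrite sqr_wDu => rho2_le_plus.
rewrite -ler_sqr ?nnegrE ?enorm_ge0 ?mulr_ge0 ?invr_ge0 ?sqrtr_ge0 //.
rewrite sqr_enorm_Qproj // u1 expr1n exprMn exprVn sqr_sqrtr ?ler0n //.
rewrite ler_pdivrMl ?ltr0n // -/t.
by have [t_ge0|t_lt0] := leP 0 t; nra.
Qed.

Lemma enorm_Qproj_ge w v rho :
  enorm w = 1 -> 0 <= rho ->
  (enorm v != 0 -> rho <= enorm (w - (enorm v)^-1 *: v) /\
                   rho <= enorm (w + (enorm v)^-1 *: v)) ->
  (Num.sqrt 2)^-1 * rho * enorm v <= enorm (Qproj w v).
Proof.
move=> w1 rho_ge0 secant_bounds.
have [->|v0] := eqVneq (enorm v) 0; first by rewrite mulr0 enorm_ge0.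
have [rho_le_wBu rho_le_wDu] := secant_bounds v0.
set u := (enorm v)^-1 *: v in rho_le_wBu rho_le_wDu.
have -> : Qproj w v = enorm v *: Qproj w u.
  by rewrite -QprojZ scalerA mulfV // scale1r.
rewrite enormZ ger0_norm ?enorm_ge0 // mulrC ler_wpM2l ?enorm_ge0 //.
exact: enorm_Qproj_unit_ge (enorm_normalize v0) _ _ _.
Qed.

Lemma edist_set_le w (S : set 'rV[R]_k) s : S s -> edist_set w S <= enorm (w - s).
Proof.
move=> Ss; apply: ge_inf; last by exists s.
by exists 0 => _ [z _ <-]; apply: enorm_ge0.
Qed.

End EuclideanRowVectors.

Lemma secant_swap (R : realType) (n D : nat) (H : 'rV[R]_n -> 'rV[R]_D) x y :
  secant H (y, x) = - secant H (x, y).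
Proof. by rewrite /secant /= -opprB enormN scalerN. Qed.

Theorem lemma12 (R : realType) (n D : nat) (H : 'rV[R]_n -> 'rV[R]_D)
  (alpha rho : R) (w : 'rV[R]_D) :
  injective H ->
  0 <= alpha ->
  (forall x y : 'rV[R]_n, enorm (H x - H y) >= alpha * enorm (x - y)) ->
  enorm w = 1 ->
  edist_set w (secant H @` @pairsP R n) >= rho ->
  forall x y : 'rV[R]_n,
    enorm (Qproj w (H x) - Qproj w (H y)) >=
      (Num.sqrt 2)^-1 * rho * alpha * enorm (x - y).
Proof.
move=> _ alpha_ge0 H_lower w1 rho_le_dist x y.
have k_ge0 : 0 <= (Num.sqrt 2 : R)^-1 by rewrite invr_ge0 sqrtr_ge0.
rewrite QprojB; set v := H x - H y.
have [rho_lt0|rho_ge0] := ltP rho 0.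
  apply: le_trans (enorm_ge0 _).
  by rewrite -!mulrA mulr_ge0_le0 // mulr_le0_ge0 ?(ltW rho_lt0) ?mulr_ge0 ?enorm_ge0.
have secant_far p : pairsP p -> rho <= enorm (w - secant H p).
  by move=> Pp; apply: le_trans rho_le_dist (edist_set_le _ (imageP _ Pp)).
have : (Num.sqrt 2)^-1 * rho * enorm v <= enorm (Qproj w v).
  apply: enorm_Qproj_ge => // v0.
  have xy : x <> y by move=> xy; rewrite /v xy subrr enorm0 eqxx in v0.
  split; first exact: secant_far (x, y) xy.
  by rewrite -[_ *: v]opprK -secant_swap; apply: secant_far => /= yx; apply: xy.
apply: le_trans; rewrite -[X in X <= _]mulrA ler_wpM2l ?mulr_ge0 //; exact: H_lower.
Qed.
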